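(* Let $V=X\cup Y$ be a finite family of L-frames, where every L-frame in $X$ is anchored at $D$ from above and every L-frame in $Y$ is anchored at $D$ from below. Let $\mathrm{OPT}$, $\mathrm{OPT}_X$, $\mathrm{OPT}_Y$ be minimum dominating sets of the intersection graphs of $V$, $X$, $Y$ respectively. Then $|\mathrm{OPT}_X|\le|\mathrm{OPT}|$ and $|\mathrm{OPT}_Y|\le|\mathrm{OPT}|$.
   Context: Fix a line $D$ of slope $-1$. An L-frame is the union of a closed horizontal segment and a closed vertical segment sharing an endpoint (the corner). It is anchored at $D$ from above if its corner is on $D$ and its segments go right and up from the corner; anchored from below if its corner is on $D$ and its segments go left and down from the corner. The intersection graph joins two L-frames iff they intersect; a dominating set is a vertex set such that every other vertex has a neighbour in it. *)

From HB Require Import structures.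
From mathcomp Require Import all_boot all_order all_algebra.
Set Implicit Arguments. Unset Strict Implicit. Unset Printing Implicit Defensive.
Import Order.TTheory GRing.Theory Num.Theory.
Local Open Scope ring_scope.

(* An L-frame: corner (cx, cy), a horizontal closed segment from the corner
   to (cx + hl, cy) and a vertical closed segment from the corner to
   (cx, cy + vl). The signs of hl, vl give the directions. *)
Record Lframe (R : realFieldType) := MkLframe { cx : R; cy : R; hl : R; vl : R }.

Definition betw (R : realFieldType) (a b t : R) : bool :=
  (Num.min a b <= t) && (t <= Num.max a b).

Definition onL (R : realFieldType) (f : Lframe R) (q : R * R) : bool :=
  ((q.2 == cy f) && betw (cx f) (cx f + hl f) q.1)
  || ((q.1 == cx f) && betw (cy f) (cy f + vl f) q.2).

Definition intersects (R : realFieldType) (f g : Lframe R) : Prop :=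
  exists q : R * R, onL f q && onL g q.

(* The line D of slope -1 is { (x,y) | x + y = c }. *)
Definition anchored_above (R : realFieldType) (c : R) (f : Lframe R) : Prop :=
  cx f + cy f = c /\ 0 < hl f /\ 0 < vl f.

Definition anchored_below (R : realFieldType) (c : R) (f : Lframe R) : Prop :=
  cx f + cy f = c /\ hl f < 0 /\ vl f < 0.

(* Intersection graph on the vertex set W (indices of the family F):
   u, v adjacent iff u != v and F u, F v intersect.
   S is a dominating set of the graph induced on W. *)
Definition dominating (R : realFieldType) (I : finType) (F : I -> Lframe R)
  (W S : {set I}) : Prop :=
  S \subset W /\
  forall v, v \in W -> v \notin S ->
    exists2 u, u \in S & (u != v) /\ intersects (F u) (F v).

Definition min_dominating (R : realFieldType) (I : finType) (F : I -> Lframe R)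
  (W S : {set I}) : Prop :=
  dominating F W S /\ forall S', dominating F W S' -> (#|S| <= #|S'|)%N.

(* An L-frame anchored from above lies in the closed half-plane x + y >= c and
   one anchored from below in x + y <= c, and each meets the line D only at its
   corner; so two such frames intersect exactly when their corners coincide.
   Hence, in a dominating set of the whole family, every frame of the other
   class can be replaced by a frame of the wanted class with the same corner:
   this yields a dominating set of X (resp. Y) that is no larger. *)
From HB Require Import structures.
From mathcomp Require Import all_boot all_order all_algebra.
From mathcomp Require Import lra.
Set Implicit Arguments. Unset Strict Implicit. Unset Printing Implicit Defensive.
Import Order.TTheory GRing.Theory Num.Theory.
Local Open Scope ring_scope.

Section Frames.
Variable R : realFieldType.

Definition corner (f : Lframe R) : R * R := (cx f, cy f).

Lemma betw_addr_gt0 (a h t : R) : 0 < h -> betw a (a + h) t -> a <= t <= a + h.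
Proof.
move=> h_gt0; have a_le : a <= a + h by lra.
by rewrite /betw min_l // max_r.
Qed.

Lemma betw_addr_lt0 (a h t : R) : h < 0 -> betw a (a + h) t -> a + h <= t <= a.
Proof.
move=> h_lt0; have a_ge : a + h <= a by lra.
by rewrite /betw min_r // max_l.
Qed.

Lemma onL_corner (f : Lframe R) : onL f (corner f).
Proof. by rewrite /onL /betw eqxx ge_min le_max !lexx. Qed.

Lemma intersects_same_corner (f g : Lframe R) :
  corner f = corner g -> intersects f g.
Proof. by move=> fg; exists (corner f); rewrite onL_corner fg onL_corner. Qed.

Lemma intersects_above_below (c : R) (f g : Lframe R) :
  anchored_above c f -> anchored_below c g -> intersects f g ->
  corner f = corner g.
Proof.
move=> [Df [hf vf]] [Dg [hg vg]] [[x y] /andP[]].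
case/orP=> [/andP[/eqP /= yf /(betw_addr_gt0 hf)/andP[f1 f2]] |
            /andP[/eqP /= xf /(betw_addr_gt0 vf)/andP[f1 f2]]];
case/orP=> [/andP[/eqP /= yg /(betw_addr_lt0 hg)/andP[g1 g2]] |
            /andP[/eqP /= xg /(betw_addr_lt0 vg)/andP[g1 g2]]];
by congr pair; lra.
Qed.

Lemma intersectsC (f g : Lframe R) : intersects f g -> intersects g f.
Proof. by case=> q /andP[fq gq]; exists q; rewrite fq gq. Qed.

Variables (I : finType) (F : I -> Lframe R).

Lemma dominating_subset_same_corner (W A S : {set I}) :
  A \subset W -> dominating F W S ->
  (forall u v, v \in A -> u \notin A -> intersects (F u) (F v) ->
     corner (F u) = corner (F v)) ->
  exists2 S', dominating F A S' & (#|S'| <= #|S|)%N.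
Proof.
move=> sAW [_ domS] cornerA.
pose g u := if u \in A then u
            else odflt u [pick x in A | corner (F x) == corner (F u)].
exists (A :&: g @: S); last first.
  exact: leq_trans (subset_leq_card (subsetIr _ _)) (leq_imset_card _ _).
split=> [|v vA vS']; first exact: subsetIl.
have gS u : u \in S -> g u \in A -> g u \in A :&: g @: S.
  by move=> uS guA; rewrite inE guA imset_f.
have vS : v \notin S.
  by apply: contra vS' => vS; have := gS v vS; rewrite /g vA; apply.
have [u uS [uv Fuv]] := domS v (subsetP sAW v vA) vS.
have [uA | uA] := boolP (u \in A).
  by exists u => //; have := gS u uS; rewrite /g uA; apply.
have Euv := cornerA u v vA uA Fuv.
have := gS u uS; rewrite /g (negbTE uA).
case: pickP => [x /andP[xA /eqP Exu] /= xS' | /(_ v)]; last by rewrite vA Euv eqxx.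
exists x; first exact: xS'.
split; first by apply: contraNneq vS' => <-; apply: xS'.
by apply: intersects_same_corner; rewrite Exu.
Qed.

End Frames.

Theorem mainTheorem6 (R : realFieldType) (c : R) (I : finType)
  (F : I -> Lframe R) (X Y : {set I})
  (hXY : X :|: Y = [set: I]) (hdisj : [disjoint X & Y])
  (hX : forall i, i \in X -> anchored_above c (F i))
  (hY : forall i, i \in Y -> anchored_below c (F i))
  (OPT OPTX OPTY : {set I})
  (hOPT : min_dominating F [set: I] OPT)
  (hOPTX : min_dominating F X OPTX)
  (hOPTY : min_dominating F Y OPTY) :
  (#|OPTX| <= #|OPT|)%N /\ (#|OPTY| <= #|OPT|)%N.
Proof.
have inXY u : u \in X = (u \notin Y).
  apply/idP/idP=> [uX | uY]; first by rewrite (disjointFr hdisj uX).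
  by have := in_setT u; rewrite -hXY inE (negbTE uY) orbF.
split.
- have [S domS leS] : exists2 S, dominating F X S & (#|S| <= #|OPT|)%N.
    apply: (dominating_subset_same_corner (subsetT X) hOPT.1) => u v vX uX Fuv.
    rewrite inXY negbK in uX.
    by apply/esym/(intersects_above_below (hX v vX) (hY u uX))/intersectsC.
  exact: leq_trans (hOPTX.2 S domS) leS.
- have [S domS leS] : exists2 S, dominating F Y S & (#|S| <= #|OPT|)%N.
    apply: (dominating_subset_same_corner (subsetT Y) hOPT.1) => u v vY uY Fuv.
    rewrite -inXY in uY.
    exact: intersects_above_below (hX u uY) (hY v vY) Fuv.
  exact: leq_trans (hOPTY.2 S domS) leS.
Qed.
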